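(* For every finite set $S$ of states containing the distinguished blank state $\text{␣}$, there exists a 4-CAS $\mathcal{C}=(L,A,S,N_4,\{f_c\}_{c\in L\setminus A})$ with state set $S$ and four distinct cells $a_1,a_2\in A$, $b_1,b_2\in L$, together with delays $\delta_1,\delta_2\in\mathbb{Z}$, such that $\mathcal{C}$ is a channel from $a_1$ to $b_1$ with delay $\delta_1$ and a channel from $a_2$ to $b_2$ with delay $\delta_2$, and $\mathcal{C}$ crosses these two channels.
   Context: A cellular automaton with sources (CAS) is a tuple $\mathcal{C}=(L,A,S,N,\{f_c\}_{c\in L\setminus A})$ where: $L$ is a subset of a lattice (here always $\mathbb{Z}^2$), whose elements are cells; $A\subseteq L$ is the set of sources; $S$ is a finite set of states containing a distinguished blank state $\text{␣}$; $N=(n_1,\dots,n_\nu)$ is a fixed tuple of distinct neighbourhood offsets containing $0$; and for each non-source $c$, $f_c:S^\nu\times\mathbb{N}\to S$ is a transition function that does not depend on its $i$-th argument whenever $c+n_i\notin L$. A message is a function $m:\{0,1,\dots,r\}\to S\setminus\{\text{␣}\}$ with $r\in\mathbb{N}$ its length $\lambda(m)$. An input is a map $\iota$ assigning a message to each source. Configurations $C_{t,\iota}:L\to S$ ($t\in\mathbb{N}$) are defined by: $C_{0,\iota}(c)=\iota(c)(0)$ for $c\in A$ and $C_{0,\iota}(c)=\text{␣}$ for $c\notin A$ (blank-initialization, assumed throughout); and $C_{t+1,\iota}(c)=\iota(c)(t+1)$ if $c\in A$ and $t<\lambda(\iota(c))$, $C_{t+1,\iota}(c)=\text{␣}$ if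 $c\in A$ and $t\ge\lambda(\iota(c))$, and $C_{t+1,\iota}(c)=f_c(C_{t,\iota}(c+n_1),\dots,C_{t,\iota}(c+n_\nu),t+1)$ otherwise. A 4-CAS is a CAS with $L\subseteq\mathbb{Z}^2$ and $N=N_4:=((-1,0),(0,-1),(1,0),(0,1),(0,0))$. Channel: for $\delta\in\mathbb{Z}$ and cells $x,y$, $\mathcal{C}$ is a channel from $x$ to $y$ with delay $\delta$ if for all $t\in\mathbb{N}$ and all inputs $\iota$, $C_{t,\iota}(y)=C_{t-\delta,\iota}(x)$ when $t\ge\delta$ and $C_{t,\iota}(y)=\text{␣}$ when $t<\delta$. Connectedness: $L$ is connected if any two cells of $L$ are joined by a finite sequence of cells of $L$, each consecutive pair differing by an offset in $N$ (for 4-CAS: orthogonally adjacent). External boundary: viewing each cell of $\mathbb{Z}^2$ as a unit square in $\mathbb{R}^2$, a finite connected $L$ has an external boundary, a cyclic sequence $(e_0,\dots,e_{k-1})$ of unit edges such that consecutive edges $e_i,e_{i+1 \bmod k}$ meet at vertices $v_i$, the $v_i$ are distinct (a simple closed curve), each $e_i$ separates a cell $\bar e_i\in L$ from a cell not in $L$, and $L$ lies in the bounded region enclosed; it is unique up to reversal and cyclic shift. Crossing: a CAS that is a channel from $a_1$ to $b_1$ and from $a_2$ to $b_2$, for four distinct cells $a_1,a_2\in A$, $b_1,b_2\in L$, crosses these channels if (i) $L$ is connected; (ii) whenever $\bar e_i=\bar e_j\in\{a_1,a_2,b_1,b_2\}$ with $i\le j$, either $|\{\bar e_l: i\le l\le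 j\}|=1$ or $|\{\bar e_l: 0\le l\le i \text{ or } j\le l\le k-1\}|=1$; and (iii) there exist indices $\alpha<\beta<\gamma<\delta$ of boundary edges such that $(\bar e_\alpha,\bar e_\beta,\bar e_\gamma,\bar e_\delta)$ is a cyclic permutation of $(a_1,a_2,b_1,b_2)$ or of $(b_2,b_1,a_2,a_1)$. *)

From HB Require Import structures.
From mathcomp Require Import all_boot all_order all_algebra.
Set Implicit Arguments. Unset Strict Implicit. Unset Printing Implicit Defensive.
Import Order.TTheory GRing.Theory Num.Theory.

(* Cells of Z^2 (also used for lattice points / vertices of unit squares:
   cell (i,j) is the unit square [i,i+1] x [j,j+1]). *)
Definition cell := (int * int)%type.

Definition cadd (c d : cell) : cell := ((c.1 + d.1)%R, (c.2 + d.2)%R).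

Definition N4 : seq cell :=
  [:: ((-1)%R, 0%R); (0%R, (-1)%R); (1%R, 0%R); (0%R, 1%R); (0%R, 0%R)].

Definition n4 (i : 'I_5) : cell := nth (0%R, 0%R) N4 i.

(* L is a finite set of cells (given as a
   list), A the sources (A ⊆ L), f c the transition function of cell c
   (only relevant for c ∈ L \ A); its arguments are the states of the
   neighbours c + n_i (i : 'I_5, in the order of N_4) and the time. *)
Record CAS4 (S : finType) := {
  cas_L : seq cell;
  cas_A : seq cell;
  cas_A_sub : {subset cas_A <= cas_L};
  cas_f : cell -> {ffun 'I_5 -> S} -> nat -> S;
  cas_f_local : forall c, c \in cas_L -> c \notin cas_A ->
    forall i : 'I_5, cadd c (n4 i) \notin cas_L ->
    forall x y : {ffun 'I_5 -> S}, (forall j, j != i -> x j = y j) ->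
    forall t, cas_f c x t = cas_f c y t
}.

(* A message m : {0..r} -> S \ {blank} is the list [m 0; ...; m r];
   its length λ(m) is r = size m - 1. *)
Definition is_message (S : finType) (blank : S) (m : seq S) : bool :=
  (0 < size m) && (blank \notin m).

Definition msg_length (S : finType) (m : seq S) : nat := (size m).-1.

Definition valid_input (S : finType) (blank : S) (C : CAS4 S)
  (iota : cell -> seq S) : Prop :=
  forall c, c \in cas_A C -> is_message blank (iota c).

(* Configurations C_{t,iota} (blank initialization).  Cells outside L are
   given the value blank (they are never used, by locality of f). *)
Fixpoint config (S : finType) (blank : S) (C : CAS4 S) (iota : cell -> seq S)
  (t : nat) (c : cell) {struct t} : S :=
  match t with
  | 0 => if c \in cas_A C then nth blank (iota c) 0 else blank
  | t'.+1 =>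
      if c \in cas_A C then
        (if t' < msg_length (iota c) then nth blank (iota c) t'.+1 else blank)
      else if c \in cas_L C then
        cas_f C c [ffun i => config blank C iota t' (cadd c (n4 i))] t'.+1
      else blank
  end.

Definition is_channel (S : finType) (blank : S) (C : CAS4 S) (x y : cell)
  (delta : int) : Prop :=
  forall iota, valid_input blank C iota -> forall t : nat,
    if (delta <= t%:Z)%R
    then config blank C iota t y = config blank C iota (absz (t%:Z - delta)%R) x
    else config blank C iota t y = blank.

Definition nbr (c d : cell) : bool := has (fun n => cadd c n == d) N4.

Definition connected (L : seq cell) : Prop :=
  forall c d, c \in L -> d \in L ->
    exists p : seq cell, [/\ all (mem L) p, path nbr c p & last c p = d].

(* ---- External boundary ----
   A closed edge path is given by its cyclic list of vertices vs = [w_0;...;w_{k-1}];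
   edge e_i joins w_i and w_{(i+1) mod k} (so e_i and e_{i+1} meet at
   w_{i+1}). *)
Definition bvert (vs : seq cell) (i : nat) : cell := nth (0%R, 0%R) vs i.
Definition bnext (vs : seq cell) (i : nat) : cell :=
  nth (0%R, 0%R) vs (i.+1 %% size vs).

Definition unit_seg (p q : cell) : bool :=
  ((p.1 == q.1) && (absz (p.2 - q.2)%R == 1)) ||
  ((p.2 == q.2) && (absz (p.1 - q.1)%R == 1)).

Definition edge_cells (p q : cell) : cell * cell :=
  if p.2 == q.2 then
    let x := Order.min p.1 q.1 in ((x, p.2), (x, (p.2 - 1)%R))
  else
    let y := Order.min p.2 q.2 in ((p.1, y), ((p.1 - 1)%R, y)).

Definition bedge (vs : seq cell) (i : nat) : cell * cell :=
  edge_cells (bvert vs i) (bnext vs i).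

Definition bar (L vs : seq cell) (i : nat) : cell :=
  if (bedge vs i).1 \in L then (bedge vs i).1 else (bedge vs i).2.

(* Inside of the closed curve: the horizontal ray from the centre
   (i+1/2, j+1/2) of cell c = (i,j) to the right crosses the curve an odd
   number of times; it crosses exactly the vertical edges at abscissa
   >= i+1 spanning [j, j+1]. *)
Definition crosses_ray (c p q : cell) : bool :=
  [&& p.1 == q.1, (c.1 + 1 <= p.1)%R & Order.min p.2 q.2 == c.2].

Definition ray_crossings (vs : seq cell) (c : cell) : nat :=
  count (fun i => crosses_ray c (bvert vs i) (bnext vs i)) (iota 0 (size vs)).

Definition inside (vs : seq cell) (c : cell) : bool := odd (ray_crossings vs c).

Definition is_ext_boundary (L vs : seq cell) : Prop :=
  [/\ 3 <= size vs,
      uniq vs,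
      forall i, i < size vs -> unit_seg (bvert vs i) (bnext vs i),
      forall i, i < size vs -> ((bedge vs i).1 \in L) != ((bedge vs i).2 \in L)
    & forall c, c \in L -> inside vs c].

Definition cyc_perm4 (w x y z p q r s : cell) : Prop :=
  [\/ (w, x, y, z) = (p, q, r, s), (w, x, y, z) = (q, r, s, p),
      (w, x, y, z) = (r, s, p, q) | (w, x, y, z) = (s, p, q, r)].

Definition crossing_cond (L vs : seq cell) (a1 a2 b1 b2 : cell) : Prop :=
  let k := size vs in
  (forall i j, i <= j -> j < k -> bar L vs i = bar L vs j ->
     bar L vs i \in [:: a1; a2; b1; b2] ->
     (forall l, i <= l <= j -> bar L vs l = bar L vs i) \/
     (forall l, l < k -> (l <= i) || (j <= l) -> bar L vs l = bar L vs i)) /\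
  (exists al be ga de, [/\ al < be, be < ga, ga < de & de < k] /\
     (cyc_perm4 (bar L vs al) (bar L vs be) (bar L vs ga) (bar L vs de)
                a1 a2 b1 b2 \/
      cyc_perm4 (bar L vs al) (bar L vs be) (bar L vs ga) (bar L vs de)
                b2 b1 a2 a1)).

Definition crosses (S : finType) (blank : S) (C : CAS4 S)
  (a1 a2 b1 b2 : cell) : Prop :=
  [/\ uniq [:: a1; a2; b1; b2],
      [/\ a1 \in cas_A C, a2 \in cas_A C, b1 \in cas_L C & b2 \in cas_L C],
      (exists d1, is_channel blank C a1 b1 d1),
      (exists d2, is_channel blank C a2 b2 d2)
    & connected (cas_L C) /\
      exists vs, is_ext_boundary (cas_L C) vs /\
                 crossing_cond (cas_L C) vs a1 a2 b1 b2].

(* The construction is a "routing automaton": every non-source cell simply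
   copies the state of one of its N4-neighbours (or keeps its own state), the
   neighbour being chosen by the parity of the current time.  Two wires, one
   from the west source a1 to the east cell b1 and one from the south source
   a2 to the north cell b2, meet in a 2x2 block in which even time steps are
   used by one wire and odd time steps by the other; waiting cells (which
   copy themselves at one parity) re-synchronise the signals so that both
   channels have delay 7 whatever the states are. *)
From HB Require Import structures.
From mathcomp Require Import all_boot all_order all_algebra.
From mathcomp Require Import zify.
Set Implicit Arguments. Unset Strict Implicit. Unset Printing Implicit Defensive.

Section Routing.

Variables (L A : seq cell) (A_sub : {subset A <= L}) (dir : cell -> bool -> 'I_5).

(* The copied neighbour always belongs to L, which makes the rule local. *)
Hypothesis dir_in_L :
  forall c b, c \in L -> c \notin A -> cadd c (n4 (dir c b)) \in L.

Definition route_f (S : finType) (c : cell) (x : {ffun 'I_5 -> S}) (t : nat) : S :=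
  x (dir c (odd t)).

Lemma route_f_local (S : finType) (c : cell) : c \in L -> c \notin A ->
  forall i : 'I_5, cadd c (n4 i) \notin L ->
  forall x y : {ffun 'I_5 -> S}, (forall j, j != i -> x j = y j) ->
  forall t, route_f c x t = route_f c y t.
Proof.
move=> cL cA i ci x y xy t; apply: xy; apply: contraNneq ci => <-.
exact: dir_in_L.
Qed.

Definition routing_cas (S : finType) : CAS4 S :=
  {| cas_L := L; cas_A := A; cas_A_sub := A_sub; cas_f := @route_f S;
     cas_f_local := @route_f_local S |}.

(* Follow the copy rules backwards from cell c at a time of parity b, for at
   most n steps; the result (a, k) means that the state of c is the state the
   source a had k steps earlier. *)
Fixpoint trace (n : nat) (c : cell) (b : bool) : option (cell * nat) :=
  if c \in A then Some (c, 0)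
  else if n is n'.+1 then
    if c \in L then
      if trace n' (cadd c (n4 (dir c b))) (~~ b) is Some (a, k)
      then Some (a, k.+1) else None
    else None
  else None.

Section Configurations.

Variables (S : finType) (blank : S) (iota : cell -> seq S).

Local Notation conf := (config blank (routing_cas S) iota).

Definition delayed (a : cell) (t k : nat) : S :=
  if k <= t then conf (t - k) a else blank.

Lemma routing_step (c : cell) (t : nat) : c \in L -> c \notin A ->
  conf t.+1 c = conf t (cadd c (n4 (dir c (odd t.+1)))).
Proof. by move=> cL cA /=; rewrite (negbTE cA) cL /route_f ffunE. Qed.

(* Soundness of traces; before time k the cell is still blank because the
   whole traced path is blank-initialised. *)
Lemma trace_sound (n : nat) (c : cell) (t : nat) (a : cell) (k : nat) :
  trace n c (odd t) = Some (a, k) -> conf t c = delayed a t k.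
Proof.
elim: n c t a k => [|n IH] c t a k /=.
  by case: ifP => // _ [<- <-]; rewrite /delayed subn0.
case: ifP => [_ [<- <-] | cA]; first by rewrite /delayed subn0.
case: ifP => // cL; case E: trace => [[a' k'] |] // [<- <-].
case: t E => [|t] E; first by rewrite /= cA.
rewrite routing_step ?cA //= negbK in E *.
by rewrite (IH _ _ _ _ E) /delayed ltnS subSS.
Qed.

End Configurations.

Lemma channel_of_trace (S : finType) (blank : S) (n : nat) (a b : cell) (k : nat) :
  trace n b false = Some (a, k) -> trace n b true = Some (a, k) ->
  is_channel blank (routing_cas S) a b (Posz k).
Proof.
move=> tr_even tr_odd iota _ t.
have tr : trace n b (odd t) = Some (a, k) by case: (odd t).
rewrite (trace_sound blank iota tr) /delayed lez_nat.
by case: leqP => // kt; rewrite subzn.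
Qed.

End Routing.

(* N4-adjacency is symmetric, since N4 is closed under negation. *)
Lemma nbr_sym (c d : cell) : nbr c d = nbr d c.
Proof.
case: c d => [x1 y1] [x2 y2]; rewrite /nbr /cadd /= !xpair_eqE !orbF.
by apply/idP/idP; lia.
Qed.

Lemma connected_cons (L : seq cell) (c e : cell) :
  connected L -> e \in L -> nbr c e -> connected (c :: L).
Proof.
move=> conL eL ce x y.
have lift p : all (mem L) p -> all (mem (c :: L)) p.
  by apply: sub_all => z /= zL; rewrite inE zL orbT.
rewrite !inE => /predU1P[-> | xL] /predU1P[-> | yL].
- by exists [::].
- have [p [pL pp <-]] := conL e y eL yL.
  by exists (e :: p); rewrite /= inE eL orbT lift ?ce.
- have [p [pL pp pe]] := conL x e xL eL.
  exists (rcons p c); rewrite all_rcons rcons_path last_rcons pe nbr_sym.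
  by split; rewrite ?pp ?ce ?lift ?andbT //; exact: mem_head.
- by have [p [pL pp pe]] := conL x y xL yL; exists p; rewrite lift.
Qed.

Fixpoint linked (s : seq cell) : bool :=
  if s is c :: s' then ((s' == [::]) || has (nbr c) s') && linked s' else true.

Lemma linked_connected (s : seq cell) : linked s -> connected s.
Proof.
elim: s => [_ c d // | c s IH /= /andP[/orP[/eqP s0 | /hasP[e es ce]] /IH conS]].
  by rewrite s0 => x y; rewrite !inE => /eqP-> /eqP->; exists [::].
exact: connected_cons conS es ce.
Qed.

Definition ext_boundary_check (L vs : seq cell) : bool :=
  [&& 3 <= size vs, uniq vs,
      all (fun i => unit_seg (bvert vs i) (bnext vs i)) (iota 0 (size vs)),
      all (fun i => ((bedge vs i).1 \in L) != ((bedge vs i).2 \in L))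
          (iota 0 (size vs))
    & all (inside vs) L].

Lemma ext_boundary_checkP (L vs : seq cell) :
  ext_boundary_check L vs -> is_ext_boundary L vs.
Proof.
case/and5P=> size3 uniq_vs /allP seg /allP sides /allP ins.
by split=> // i ilt; [apply: seg | apply: sides]; rewrite mem_iota.
Qed.

(* Condition (ii) of crossings: along the boundary, the edges adjacent to
   each cell of sp form one contiguous block (possibly wrapping around). *)
Definition bars_contiguous (L vs sp : seq cell) : Prop :=
  forall i j, i <= j -> j < size vs -> bar L vs i = bar L vs j ->
     bar L vs i \in sp ->
     (forall l, i <= l <= j -> bar L vs l = bar L vs i) \/
     (forall l, l < size vs -> (l <= i) || (j <= l) -> bar L vs l = bar L vs i).

Definition bars_contiguous_check (L vs sp : seq cell) : bool :=
  let k := size vs in let b := bar L vs in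
  all (fun i => all (fun j => [&& i <= j, b i == b j & b i \in sp] ==>
      all (fun l => b l == b i) (index_iota i j.+1) ||
      all (fun l => (l <= i) || (j <= l) ==> (b l == b i)) (iota 0 k))
    (iota 0 k)) (iota 0 k).

Lemma bars_contiguous_checkP (L vs sp : seq cell) :
  bars_contiguous_check L vs sp -> bars_contiguous L vs sp.
Proof.
move=> /allP chk i j ij jk bij bsp.
have ik : i < size vs := leq_ltn_trans ij jk.
have := chk i; rewrite mem_iota ik => /(_ isT) /allP /(_ j).
rewrite mem_iota jk ij bsp (introT eqP bij) => /(_ isT).
case/orP=> /allP bl; [left | right] => l.
  by case/andP=> il lj; apply/eqP/bl; rewrite mem_index_iota il ltnS.
by move=> lk lij; apply/eqP; move: (bl l); rewrite mem_iota lk lij => /(_ isT).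
Qed.

(* The concrete automaton (x to the right, y upwards; a = source):

     y=3         G  b2
     y=2         N0 N1
     y=1      W1 P  P  E1 b1
     y=0   a1 W0 P  P  E0 F
     y=-1        S0 S1
     y=-2        a2

   The 2x2 block P carries the a1-signal eastwards at one parity and the
   a2-signal northwards at the other. *)
Definition pt (x y : int) : cell := (x, y).
Arguments pt (x y)%_Z.

Definition west : 'I_5 := @Ordinal 5 0 isT.
Definition south : 'I_5 := @Ordinal 5 1 isT.
Definition stay : 'I_5 := @Ordinal 5 4 isT.

Definition a1 : cell := pt (-2) 0.
Definition a2 : cell := pt 0 (-2).
Definition b1 : cell := pt 3 1.
Definition b2 : cell := pt 1 3.

(* Copy rule of each non-source cell: (neighbour at even times, at odd
   times).  Every cell is adjacent to a later one, so the cell list is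
   linked. *)
Definition route_table : seq (cell * ('I_5 * 'I_5)) :=
  [:: (b1, (west, south));          (b2, (west, south));
      (pt 3 0, (stay, west));       (pt 2 0, (west, stay));
      (pt 2 1, (stay, west));       (pt 0 3, (south, stay));
      (pt 0 2, (stay, south));      (pt 1 2, (south, stay));
      (pt (-1) 1, (stay, south));   (pt (-1) 0, (west, west));
      (pt 1 (-1), (west, stay));    (pt 0 (-1), (south, south));
      (pt 1 1, (west, south));      (pt 0 1, (south, west));
      (pt 1 0, (south, west));      (pt 0 0, (west, south))].

Definition sources : seq cell := [:: a1; a2].
Definition cells : seq cell := sources ++ map fst route_table.

Definition route (c : cell) (b : bool) : 'I_5 :=
  let rule := nth (c, (stay, stay)) route_table (index c (map fst route_table)) in
  if b then rule.2.2 else rule.2.1.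

Lemma sources_sub : {subset sources <= cells}.
Proof. by move=> c cA; rewrite mem_cat cA. Qed.

Lemma route_in_cells (c : cell) (b : bool) :
  c \in cells -> c \notin sources -> cadd c (n4 (route c b)) \in cells.
Proof.
have /allP ok : all (fun c => (c \in sources) || (cadd c (n4 (route c false))
  \in cells) && (cadd c (n4 (route c true)) \in cells)) cells by vm_compute.
by move=> /ok /orP[-> // | /andP[r0 r1] _]; case: b.
Qed.

Definition crossing_cas (S : finType) : CAS4 S :=
  routing_cas sources_sub route_in_cells S.

(* Vertices of the external boundary, counterclockwise from the south-west
   corner of a1. *)
Definition boundary : seq cell :=
  [:: pt (-2) 0; pt (-1) 0; pt 0 0; pt 0 (-1); pt 0 (-2); pt 1 (-2);
      pt 1 (-1); pt 2 (-1); pt 2 0; pt 3 0; pt 4 0; pt 4 1; pt 4 2; pt 3 2;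
      pt 2 2; pt 2 3; pt 2 4; pt 1 4; pt 0 4; pt 0 3; pt 0 2; pt (-1) 2;
      pt (-1) 1; pt (-2) 1].

Lemma crossing_channels (S : finType) (blank : S) :
  is_channel blank (crossing_cas S) a1 b1 (Posz 7) /\
  is_channel blank (crossing_cas S) a2 b2 (Posz 7).
Proof. by split; apply: (channel_of_trace (n := size cells)); vm_compute. Qed.

Lemma crossing_geometry :
  crossing_cond cells boundary a1 a2 b1 b2.
Proof.
split; first by apply: bars_contiguous_checkP; vm_compute.
by exists 0, 3, 11, 15; split=> //; left; apply: Or41; vm_compute.
Qed.

Theorem theorem1 (S : finType) (blank : S) :
  exists (C : CAS4 S) (a1 a2 b1 b2 : cell) (d1 d2 : int),
    [/\ uniq [:: a1; a2; b1; b2],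
        [/\ a1 \in cas_A C, a2 \in cas_A C, b1 \in cas_L C & b2 \in cas_L C],
        is_channel blank C a1 b1 d1,
        is_channel blank C a2 b2 d2
      & crosses blank C a1 a2 b1 b2].
Proof.
have [ch1 ch2] := crossing_channels blank.
have distinct : uniq [:: a1; a2; b1; b2] by vm_compute.
have ends : [/\ a1 \in cas_A (crossing_cas S), a2 \in cas_A (crossing_cas S),
  b1 \in cas_L (crossing_cas S) & b2 \in cas_L (crossing_cas S)].
  by split; vm_compute.
exists (crossing_cas S), a1, a2, b1, b2, (Posz 7), (Posz 7); split=> //.
split=> //; [by exists (Posz 7) | by exists (Posz 7) | split].
  by apply: linked_connected; vm_compute.
exists boundary; split; last exact: crossing_geometry.
by apply: ext_boundary_checkP; vm_compute.
Qed.
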